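(* For every $n\ge0$, the maps $\varphi_L,\varphi_R\colon\mathcal{T}_n\to\mathcal{P}_n(1212)$ are bijections.
   Context: $\mathcal{T}_n$ is the set of binary trees on $n$ vertices labeled $1,\dots,n$ by the search tree property (vertices in the left subtree of $i$ are smaller than $i$, those in the right subtree larger). A left branch is a maximal sequence of vertices $v,c_L(v),c_L^2(v),\dots$ connected by left-child edges; right branches analogously. For $T\in\mathcal{T}_n$, $\varphi_L(T)$ is the set partition of $[n]$ whose blocks are the vertex sets of the maximal left branches of $T$ (i.e. $i\sim_L j$ iff $i,j$ lie on the same left branch), and $\varphi_R(T)$ is the partition into vertex sets of maximal right branches. Set partitions of $[n]$ are identified with restricted growth strings (RGS) $x_1\cdots x_n$: order blocks by smallest element and let $x_i=j$ if $i$ is in the $j$-th block; $\mathcal{P}_n$ is the set of all RGS of length $n$. A string $x$ contains a pattern string $\tau=\tau_1\cdots\tau_m$ if there are indices $i_1<\dots<i_m$ with $x_{i_a}<x_{i_b}\iff\tau_a<\tau_b$ and $x_{i_a}=x_{i_b}\iff\tau_a=\tau_b$; $\mathcal{P}_n(1212)$ is the set of RGS avoiding $1212$ (the non-crossing set partitions). *)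

From mathcomp Require Import all_boot.
Set Implicit Arguments. Unset Strict Implicit. Unset Printing Implicit Defensive.

(* Unlabeled binary tree shapes; a binary tree on n vertices labeled 1..n by
   the search-tree property is uniquely determined by its shape: the labels are
   the in-order positions (vertex with label off + size l + 1 where l is its
   left subtree and off the number of vertices preceding its subtree). *)
Inductive btree := Leaf | Node of btree & btree.

Fixpoint bsize (t : btree) : nat :=
  if t is Node l r then (bsize l + bsize r).+1 else 0.

Definition trees (n : nat) (t : btree) : Prop := bsize t = n.

(* lkeys t off top : for the vertices of t (labels off+1 .. off+bsize t), listed
   in increasing label order, the label of the top vertex of the maximal left
   branch containing it. [top] is Some v if the root of t is the left child of a
   vertex whose left branch has top v, and None otherwise. *)
Fixpoint lkeys (t : btree) (off : nat) (top : option nat) : seq nat :=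
  if t is Node l r then
    let v := off + bsize l + 1 in
    let tp := odflt v top in
    lkeys l off (Some tp) ++ tp :: lkeys r v None
  else [::].

(* same for maximal right branches *)
Fixpoint rkeys (t : btree) (off : nat) (top : option nat) : seq nat :=
  if t is Node l r then
    let v := off + bsize l + 1 in
    let tp := odflt v top in
    rkeys l off None ++ tp :: rkeys r v (Some tp)
  else [::].

(* RGS of the set partition of [n] given by a block-key for each i = 1..n:
   blocks ordered by smallest element (= first occurrence), x_i = j if i is in
   the j-th block: j = number of distinct keys among positions up to the first
   occurrence of the key of i. *)
Definition rgs_of_keys (s : seq nat) : seq nat :=
  [seq size (undup (take (index k s).+1 s)) | k <- s].

Definition phiL (t : btree) : seq nat := rgs_of_keys (lkeys t 0 None).
Definition phiR (t : btree) : seq nat := rgs_of_keys (rkeys t 0 None).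

Definition is_rgs (n : nat) (x : seq nat) : Prop :=
  size x = n /\
  forall i, i < n ->
    1 <= nth 0 x i <= (\max_(j < i) nth 0 x j).+1.

Definition contains (x tau : seq nat) : Prop :=
  exists y, subseq y x /\ size y = size tau /\
    forall a b, a < size tau -> b < size tau ->
      (nth 0 y a < nth 0 y b = (nth 0 tau a < nth 0 tau b)) /\
      ((nth 0 y a == nth 0 y b) = (nth 0 tau a == nth 0 tau b)).

Definition rgs1212 (n : nat) (x : seq nat) : Prop :=
  is_rgs n x /\ ~ contains x [:: 1; 2; 1; 2].

Definition bij_between (A : btree -> Prop) (B : seq nat -> Prop)
  (f : btree -> seq nat) : Prop :=
  (forall t, A t -> B (f t)) /\
  (forall t1 t2, A t1 -> A t2 -> f t1 = f t2 -> t1 = t2) /\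
  (forall x, B x -> exists t, A t /\ f t = x).

(* Both maps factor through a sequence of block keys, which determines the
   partition only up to relabeling.  In a tree with root v, the left branch
   through v descends to vertex 1, so v is the last element of the first
   block, and the vertices above v lie in the right subtree, on branches of
   their own: the key sequence splits as A ++ v :: B, where the first block
   closes at v and B shares no block with A ++ [v].  A noncrossing sequence
   splits in exactly one such way (at the last occurrence of its first
   entry), with noncrossing halves, so by induction left branches match trees
   with noncrossing partitions.  The right branches of T are the reversed left
   branches of its mirror image.  Finally, the restricted growth string is the
   canonical relabeling of a key sequence, and it avoids 1212 exactly when
   its partition is noncrossing. *)

From mathcomp Require Import all_boot zify.
Set Implicit Arguments. Unset Strict Implicit. Unset Printing Implicit Defensive.

Section SeqFacts.
Variable T : eqType.
Implicit Types (s t X B : seq T) (x : T).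

Lemma subseq_cat_split t X B : subseq t (X ++ B) ->
  exists t1 t2, [/\ t = t1 ++ t2, subseq t1 X & subseq t2 B].
Proof.
case/subseqP => m sz_m ->; rewrite size_cat in sz_m.
exists (mask (take (size X) m) X), (mask (drop (size X) m) B).
by rewrite -mask_cat ?cat_take_drop ?mask_subseq ?size_takel // sz_m leq_addr.
Qed.

Lemma subseq_cons_notin x t X B :
  x \notin X -> subseq (x :: t) (X ++ x :: B) -> subseq t B.
Proof.
elim: X => [|y X IH] /=; first by rewrite eqxx.
by rewrite inE negb_or => /andP[/negbTE -> /IH].
Qed.

Lemma last_occurrence x s : x \in s -> exists A B, s = A ++ x :: B /\ x \notin B.
Proof.
elim/last_ind: s => // s y IH; rewrite mem_rcons inE.
case: (eqVneq x y) => [-> _ | xy /IH [A [B [-> xB]]]]; first by exists s, [::]; rewrite cats1.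
by exists A, (rcons B y); rewrite rcons_cat rcons_cons mem_rcons inE negb_or xy.
Qed.

Lemma size_undup_rcons s x :
  size (undup (rcons s x)) = size (undup s) + (x \notin s).
Proof.
rewrite undup_rcons size_rcons size_filter -(count_predC (pred1 x) (undup s)).
by rewrite count_uniq_mem ?undup_uniq // mem_undup addnC; case: (x \in s).
Qed.

Lemma index_map_in (U : eqType) (f : T -> U) s x :
  {in s &, injective f} -> x \in s -> index (f x) (map f s) = index x s.
Proof.
elim: s => //= y s IH f_inj xs; rewrite (inj_in_eq f_inj) ?mem_head //.
case: eqP => // /eqP yx; congr _.+1; apply: IH; last by move: xs; rewrite inE eq_sym (negbTE yx).
by apply: sub_in2 f_inj => z; apply: predU1r.
Qed.

Lemma size_undup_map_in (U : eqType) (f : T -> U) s :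
  {in s &, injective f} -> size (undup (map f s)) = size (undup s).
Proof.
move=> f_inj; rewrite -(size_map f (undup s)); apply/perm_size/uniq_perm.
- exact: undup_uniq.
- by rewrite map_inj_in_uniq ?undup_uniq //; apply: sub_in2 f_inj => y; rewrite mem_undup.
- move=> y; rewrite mem_undup.
  by apply/mapP/mapP => -[z zs ->]; exists z; rewrite ?mem_undup in zs *.
Qed.

End SeqFacts.

(** * Relabelings and noncrossing sequences *)

(* Two key sequences induce the same set partition iff one is a relabeling
   of the other. *)
Definition relabeling (s s' : seq nat) :=
  exists2 f : nat -> nat, {in s &, injective f} & s' = map f s.

Lemma relabeling_refl s : relabeling s s.
Proof. by exists id; [move=> ? ? _ _ | rewrite map_id]. Qed.

Lemma size_relabeling s s' : relabeling s s' -> size s' = size s.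
Proof. by case=> f _ ->; rewrite size_map. Qed.

Lemma relabeling_sym s s' : relabeling s s' -> relabeling s' s.
Proof.
case=> f f_inj ->; exists (fun y => nth 0 s (index y (map f s))).
  by move=> _ _ /mapP[x sx ->] /mapP[y sy ->]; rewrite !nth_index_map // => ->.
by rewrite -map_comp -[LHS]map_id; apply/eq_in_map => x sx /=; rewrite nth_index_map.
Qed.

Lemma relabeling_trans s1 s2 s3 :
  relabeling s1 s2 -> relabeling s2 s3 -> relabeling s1 s3.
Proof.
case=> f f_inj -> [g g_inj ->]; exists (g \o f); last by rewrite map_comp.
by move=> x y sx sy /g_inj /f_inj; apply; rewrite ?map_f.
Qed.

Lemma relabeling_rev s s' : relabeling s s' -> relabeling (rev s) (rev s').
Proof.
case=> f f_inj ->; exists f; last by rewrite map_rev.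
by move=> x y; rewrite !mem_rev; apply: f_inj.
Qed.

Lemma relabeling_rcons_head A c A' c' : head c A = c -> head c' A' = c' ->
  relabeling A A' -> relabeling (rcons A c) (rcons A' c').
Proof.
case: A => [_ _ /size_relabeling /size0nil -> | a A /= <-{c} hA' [f f_inj eA']].
  by exists (fun=> c') => [x y|]; rewrite ?inE => // /eqP -> /eqP ->.
have -> : c' = f a by rewrite -hA' eA'.
exists f; last by rewrite eA' -map_rcons.
apply: sub_in2 f_inj => x; rewrite -rcons_cons mem_rcons inE.
by case/predU1P => [->|]; rewrite ?mem_head.
Qed.

Lemma relabeling_cat_disjoint X B X' B' :
  {in B, forall k, k \notin X} -> {in B', forall k, k \notin X'} ->
  relabeling X X' -> relabeling B B' -> relabeling (X ++ B) (X' ++ B').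
Proof.
move=> XB X'B' [f f_inj eX'] [g g_inj eB']; subst X' B'.
have notB k : k \in X -> (k \in B) = false by move=> kX; apply/negP => /XB; rewrite kX.
exists (fun k => if k \in B then g k else f k); last first.
  by rewrite map_cat; congr (_ ++ _); apply/eq_in_map => k kX; rewrite ?kX ?notB.
have fgB x y : x \in B -> y \in X -> g x <> f y.
  by move=> xB yX e; have := X'B' _ (map_f g xB); rewrite e (map_f f yX).
move=> x y; rewrite !mem_cat => /orP[xX|xB] /orP[yX|yB].
- by rewrite !notB //; apply: f_inj.
- by rewrite notB // yB => e; case: (fgB _ _ yB xX (esym e)).
- by rewrite xB notB // => e; case: (fgB _ _ xB yX e).
- by rewrite xB yB; apply: g_inj.
Qed.

Definition noncrossing (s : seq nat) := forall a b, subseq [:: a; b; a; b] s -> a = b.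

Lemma noncrossing_subseq s s' : subseq s s' -> noncrossing s' -> noncrossing s.
Proof. by move=> ss' nc a b sub; apply: nc; apply: subseq_trans sub ss'. Qed.

Lemma noncrossing_rev s : noncrossing s -> noncrossing (rev s).
Proof. by move=> nc a b; rewrite -[[:: a; b; a; b]]revK subseq_rev => /nc ->. Qed.

Lemma noncrossing_relabeling s s' : relabeling s s' -> noncrossing s -> noncrossing s'.
Proof.
case=> f f_inj -> nc a b /subseqP [m _]; rewrite -map_mask.
have := mask_subseq m s.
case: (mask m s) => [|a1 [|b1 [|a2 [|b2 [|]]]]] //= sub [ea eb ea' eb'].
have mem k : k \in [:: a1; b1; a2; b2] -> k \in s by apply: mem_subseq.
have e2 : a2 = a1 by apply: f_inj; rewrite ?mem ?inE ?eqxx ?orbT // -ea -ea'.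
have e3 : b2 = b1 by apply: f_inj; rewrite ?mem ?inE ?eqxx ?orbT // -eb -eb'.
by rewrite ea eb (nc a1 b1) // -{2}e2 -{2}e3.
Qed.

Lemma noncrossing_cat_disjoint X B : {in B, forall k, k \notin X} ->
  noncrossing X -> noncrossing B -> noncrossing (X ++ B).
Proof.
move=> XB ncX ncB a b /subseq_cat_split [t1 [t2 [e s1 s2]]].
have shared k : k \in t1 -> k \in t2 -> False.
  by move=> /(mem_subseq s1) kX /(mem_subseq s2) /XB; rewrite kX.
move: e s1 shared; case: t1 => [|? [|? [|? [|? [|? ?]]]]] //=.
- by move=> e _ _; apply: ncB; rewrite e.
- by case=> <- <- _ sh; case: (sh a); rewrite !inE eqxx ?orbT.
- by case=> <- <- <- _ sh; case: (sh a); rewrite !inE eqxx ?orbT.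
- by case=> <- <- <- <- _ sh; case: (sh b); rewrite !inE eqxx ?orbT.
- by case=> <- <- <- <- <- s1 _; apply: ncX.
Qed.

Lemma noncrossing_rcons_head A c :
  head c A = c -> noncrossing A -> noncrossing (rcons A c).
Proof.
move=> hA ncA a b; rewrite -cats1 => /subseq_cat_split [t1 [t2 [e s1 s2]]].
have := size_subseq s2; case: t2 e s2 => [|y [|]] // e s2 _.
  by apply: ncA; rewrite e cats0.
move: s2; rewrite sub1seq inE => /eqP ey; subst y.
move: e s1; case: t1 => [|? [|? [|? [|? t1]]]] //=; last by case: t1.
case=> <- <- <- ->; case: A hA ncA => [|c' A /= ->{c'} ncA] //=.
case: (eqVneq a c) => [//|_ s1].
by rewrite (ncA c a) //= eqxx.
Qed.

(** * Splitting off the first block *)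

(* [A ++ c :: B] starts with [c] and [c] does not occur in [B]: the block of
   the first entry closes at [c], and no block of [B] meets [A ++ [:: c]]. *)
Definition block_split (A : seq nat) (c : nat) (B : seq nat) :=
  head c A = c /\ {in B, forall k, k \notin rcons A c}.

Lemma noncrossing_cat_block A c B : block_split A c B ->
  noncrossing A -> noncrossing B -> noncrossing (A ++ c :: B).
Proof.
case=> hA AB ncA ncB; rewrite -cat_rcons.
exact: noncrossing_cat_disjoint AB (noncrossing_rcons_head hA ncA) ncB.
Qed.

Lemma relabeling_cat_block A c B A' c' B' :
  block_split A c B -> block_split A' c' B' ->
  relabeling A A' -> relabeling B B' -> relabeling (A ++ c :: B) (A' ++ c' :: B').
Proof.
case=> hA AB [hA' A'B'] rA rB; rewrite -!cat_rcons.
exact: relabeling_cat_disjoint AB A'B' (relabeling_rcons_head hA hA' rA) rB.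
Qed.

Lemma head_block_split A c B : block_split A c B -> head c (A ++ c :: B) = c.
Proof. by case: A => [|a A] []. Qed.

Lemma block_split_uniq A c B A' c' B' :
  block_split A c B -> block_split A' c' B' -> A ++ c :: B = A' ++ c' :: B' ->
  [/\ A = A', c = c' & B = B'].
Proof.
wlog le_AA' : A c B A' c' B' / size A <= size A'.
  move=> wlog_le sp sp' e; case: (leqP (size A) (size A')) => [|/ltnW] le.
    exact: wlog_le.
  by case: (wlog_le _ _ _ _ _ _ le sp' sp (esym e)) => -> -> ->.
move=> sp sp' e.
have ec : c' = c.
  have := head_block_split sp'; rewrite -e.
  by case: (A) sp => [|a A0] [] //= ->.
subst c'; case: (ltngtP (size A) (size A')) le_AA' => // [lt_AA' _ | eq_AA' _].
  have : c \in drop (size A).+1 (A' ++ c :: B').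
    rewrite drop_cat; case: ltnP => [_|le]; first by rewrite mem_cat mem_head orbT.
    by rewrite (_ : _ - _ = 0) ?drop0 ?mem_head //; lia.
  by rewrite -e -cat_rcons drop_size_cat ?size_rcons // => /sp.2; rewrite mem_rcons mem_head.
by move/eqP: e; rewrite eqseq_cat // => /andP[/eqP -> /eqP [->]].
Qed.

Lemma exists_block_split s : noncrossing s -> s != [::] ->
  exists A c B, s = A ++ c :: B /\ block_split A c B.
Proof.
case: s => // x s nc _; have [A [B [e xB]]] := last_occurrence (mem_head x s).
exists A, x, B; split=> //; split.
  by case: A e {xB} => [|a A] //= [<- _].
move=> k kB; rewrite mem_rcons inE; case: (eqVneq k x) => [kx | kx /=].
  by move: xB; rewrite -kx kB.
apply/negP => kA; suff : x = k by move/esym/eqP; rewrite (negbTE kx).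
case: A e kA => [|a A] //= [<-{a} es]; subst s; rewrite inE (negbTE kx) /= => kA.
apply: nc; rewrite /= eqxx -cat1s; apply: cat_subseq; first by rewrite sub1seq.
by rewrite /= eqxx sub1seq.
Qed.

Lemma block_split_relabeling A c B x : block_split A c B ->
  relabeling (A ++ c :: B) x -> exists A' c' B',
  [/\ x = A' ++ c' :: B', block_split A' c' B', relabeling A A' & relabeling B B'].
Proof.
move=> [hA AB] [f f_inj ->]; exists (map f A), (f c), (map f B).
have sub_inj s : {subset s <= A ++ c :: B} -> relabeling s (map f s).
  by move=> sA; exists f => //; apply: sub_in2 f_inj.
split; first by rewrite map_cat.
- split; first by case: A {AB f_inj sub_inj} hA => //= a A ->.
  move=> _ /mapP [b bB ->]; rewrite -map_rcons; apply/negP => /mapP [a aA].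
  move/f_inj; rewrite -cat_rcons !mem_cat aA bB orbT => /(_ isT isT) eba.
  by move: (AB _ bB); rewrite eba aA.
- by apply: sub_inj => a aA; rewrite mem_cat aA.
- by apply: sub_inj => b bB; rewrite mem_cat inE bB !orbT.
Qed.

(** * Key sequences of trees *)

Lemma size_lkeys t off top : size (lkeys t off top) = bsize t.
Proof. by elim: t off top => //= l IHl r IHr off top; rewrite size_cat /= IHl IHr addnS. Qed.

Lemma size_rkeys t off top : size (rkeys t off top) = bsize t.
Proof. by elim: t off top => //= l IHl r IHr off top; rewrite size_cat /= IHl IHr addnS. Qed.

Lemma lkeys_range t off top k : k \in lkeys t off top ->
  (off < k <= off + bsize t) || (top == Some k).
Proof.
elim: t off top => //= l IHl r IHr off top.
rewrite mem_cat inE => /orP[/IHl|/orP[/eqP->|/IHr]].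
- case/orP => [|/eqP[<-]]; last by case: top => [p|] /=; rewrite ?eqxx ?orbT //; lia.
  by move=> ?; apply/orP; left; lia.
- by case: top => [p|] /=; rewrite ?eqxx ?orbT //; lia.
- by rewrite orbF => ?; apply/orP; left; lia.
Qed.

Lemma lkeys_head t off p : head p (lkeys t off (Some p)) = p.
Proof. by elim: t off p => //= l IHl r _ off p; case: (lkeys l off _) (IHl off p). Qed.

Lemma map_lkeys_id f t off : (forall k, off < k <= off + bsize t -> f k = k) ->
  map f (lkeys t off None) = lkeys t off None.
Proof. by move=> fid; apply/map_id_in => k /lkeys_range; rewrite orbF => /fid. Qed.

Lemma map_lkeys_top f t off p : (forall k, off < k <= off + bsize t -> f k = k) ->
  map f (lkeys t off (Some p)) = lkeys t off (Some (f p)).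
Proof.
elim: t off p => //= l IHl r _ off p fid.
by rewrite map_cat /= IHl ?map_lkeys_id // => k k_in; apply: fid; lia.
Qed.

Definition transp (a b k : nat) := if k == a then b else if k == b then a else k.

Lemma transpK a b : involutive (transp a b).
Proof. by move=> k; rewrite /transp; do !case: eqP => //=; lia. Qed.

Lemma lkeys_top_relabeling t off p : ~~ (off < p <= off + bsize t) ->
  relabeling (lkeys t off None) (lkeys t off (Some p)).
Proof.
case: t => [|l r] /= p_out; first exact: relabeling_refl.
set v := off + bsize l + 1.
exists (transp v p); first by apply: in2W; apply/inv_inj/transpK.
have fix_k k : k != v -> k != p -> transp v p k = k.
  by rewrite /transp => /negbTE -> /negbTE ->.
rewrite map_cat /= map_lkeys_top ?map_lkeys_id ?[transp v p v]/transp ?eqxx //.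
all: by move=> k k_in; apply: fix_k; apply/eqP; lia.
Qed.

Lemma lkeys_block_split l r off :
  block_split (lkeys l off (Some (off + bsize l + 1))) (off + bsize l + 1)
              (lkeys r (off + bsize l + 1) None).
Proof.
split; first exact: lkeys_head.
move=> k /lkeys_range; rewrite orbF mem_rcons inE => k_in.
apply/norP; split; first by apply/eqP; lia.
by apply/negP => /lkeys_range /orP[|/eqP[]]; lia.
Qed.

Lemma noncrossing_lkeys t off : noncrossing (lkeys t off None).
Proof.
elim: t off => [|l IHl r IHr] off; first by move=> a b.
apply: noncrossing_cat_block (lkeys_block_split l r off) _ (IHr _).
by apply: noncrossing_relabeling (IHl off); apply: lkeys_top_relabeling; lia.
Qed.

Lemma lkeys_relabeling_inj t1 t2 off1 off2 x :
  relabeling (lkeys t1 off1 None) x -> relabeling (lkeys t2 off2 None) x -> t1 = t2.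
Proof.
elim: t1 t2 off1 off2 x => [|l1 IHl r1 IHr] [|l2 r2] off1 off2 x // rx1 rx2.
1,2: by have := size_relabeling rx1; rewrite (size_relabeling rx2) !size_lkeys.
have [A1 [c1 [B1 [ex sp1 rA1 rB1]]]] :=
  block_split_relabeling (lkeys_block_split l1 r1 off1) rx1.
have [A2 [c2 [B2 [ex' sp2 rA2 rB2]]]] :=
  block_split_relabeling (lkeys_block_split l2 r2 off2) rx2.
case: (block_split_uniq sp1 sp2 (etrans (esym ex) ex')) => eA _ eB; subst A2 B2; congr Node.
  apply: (IHl _ off1 off2 A1).
    by apply: relabeling_trans rA1; apply: lkeys_top_relabeling; lia.
  by apply: relabeling_trans rA2; apply: lkeys_top_relabeling; lia.
exact: IHr rB1 rB2.
Qed.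

Lemma lkeys_relabeling_surj x off :
  noncrossing x -> exists t, relabeling (lkeys t off None) x.
Proof.
have [n] := ubnP (size x); elim: n x off => // n IH x off lt_xn nc.
case: (eqVneq x [::]) => [->|x_nil]; first by exists Leaf; apply: relabeling_refl.
have [A [c [B [ex sp]]]] := exists_block_split nc x_nil.
move: lt_xn nc; rewrite ex size_cat /= => lt_xn nc.
have [l rl] : exists l, relabeling (lkeys l off None) A.
  by apply: IH; [lia | apply: noncrossing_subseq nc; apply: prefix_subseq].
have [r rr] : exists r, relabeling (lkeys r (off + bsize l + 1) None) B.
  apply: IH; first lia.
  by apply: noncrossing_subseq nc; apply: subseq_trans (suffix_subseq A _); apply: subseq_cons.
exists (Node l r); apply: relabeling_cat_block (lkeys_block_split l r off) sp _ rr.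
by apply: relabeling_trans rl; apply: relabeling_sym; apply: lkeys_top_relabeling; lia.
Qed.

Fixpoint mirror (t : btree) : btree :=
  if t is Node l r then Node (mirror r) (mirror l) else Leaf.

Lemma mirrorK : involutive mirror.
Proof. by elim=> //= l -> r ->. Qed.

Lemma bsize_mirror t : bsize (mirror t) = bsize t.
Proof. by elim: t => //= l -> r ->; rewrite addnC. Qed.

(* Mirroring reverses the in-order, so with offsets [off] in [t] and [off']
   in [mirror t] the vertex labelled [k] becomes [N - k]. *)
Lemma rkeys_mirror t off off' top (N := (off + off' + bsize t).+1) :
  rkeys (mirror t) off' (omap (subn N) top) = rev (map (subn N) (lkeys t off top)).
Proof.
elim: t off off' top @N => //= l IHl r IHr off off' top.
rewrite bsize_mirror map_cat rev_cat /= rev_cons cat_rcons.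
set N := (off + off' + _).+1; set v := off + bsize l + 1; set v' := off' + bsize r + 1.
have -> : odflt v' (omap (subn N) top) = N - odflt v top by case: top => [p|] //=; lia.
have NvR : (v + off' + bsize r).+1 = N by lia.
have NvL : (off + v' + bsize l).+1 = N by lia.
by have := IHr v off' None; have := IHl off v' (Some (odflt v top)); rewrite /= NvR NvL => -> ->.
Qed.

Lemma rkeys_mirror_relabeling t :
  relabeling (rev (lkeys t 0 None)) (rkeys (mirror t) 0 None).
Proof.
rewrite (rkeys_mirror t 0 0 None) -map_rev; exists (subn (0 + 0 + bsize t).+1) => //.
by move=> j k; rewrite !mem_rev => /lkeys_range + /lkeys_range; rewrite !orbF; lia.
Qed.

Lemma noncrossing_rkeys t : noncrossing (rkeys t 0 None).
Proof.
rewrite -[t]mirrorK; apply: noncrossing_relabeling (rkeys_mirror_relabeling _) _.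
exact/noncrossing_rev/noncrossing_lkeys.
Qed.

Lemma rkeys_relabeling_inj t1 t2 x :
  relabeling (rkeys t1 0 None) x -> relabeling (rkeys t2 0 None) x -> t1 = t2.
Proof.
have to_lkeys t : relabeling (rkeys t 0 None) x ->
    relabeling (lkeys (mirror t) 0 None) (rev x).
  rewrite -{1}[t]mirrorK -[lkeys _ _ _]revK => rx; apply: relabeling_rev.
  exact: relabeling_trans (rkeys_mirror_relabeling _) rx.
move=> /to_lkeys r1 /to_lkeys r2; rewrite -[t1]mirrorK -[t2]mirrorK.
by congr mirror; apply: lkeys_relabeling_inj r1 r2.
Qed.

Lemma rkeys_relabeling_surj x :
  noncrossing x -> exists t, relabeling (rkeys t 0 None) x.
Proof.
move=> /noncrossing_rev /(lkeys_relabeling_surj 0) [t rt]; exists (mirror t).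
apply: relabeling_trans (relabeling_sym (rkeys_mirror_relabeling t)) _.
by rewrite -[x]revK; apply: relabeling_rev.
Qed.

(** * Restricted growth strings *)

Definition ndistinct (s : seq nat) (m : nat) := size (undup (take m s)).

Lemma ndistinctS s i : i < size s ->
  ndistinct s i.+1 = ndistinct s i + (nth 0 s i \notin take i s).
Proof. by move=> lt_is; rewrite /ndistinct (take_nth 0 lt_is) size_undup_rcons. Qed.

Lemma ndistinct_mono s : {homo ndistinct s : m n / m <= n}.
Proof.
move=> m n le_mn; apply: uniq_leq_size (undup_uniq _) _ => y.
by rewrite !mem_undup -(take_takel s le_mn); apply: mem_take.
Qed.

Lemma ndistinct_index s k : k \in s ->
  ndistinct s (index k s).+1 = (ndistinct s (index k s)).+1.
Proof. by move=> ks; rewrite ndistinctS ?index_mem // nth_index // in_take // ltnn addn1. Qed.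

Lemma nth_rgs_of_keys s i : i < size s ->
  nth 0 (rgs_of_keys s) i = ndistinct s (index (nth 0 s i) s).+1.
Proof. exact: nth_map. Qed.

Lemma rgs_of_keys_relabeling s s' : relabeling s s' -> rgs_of_keys s' = rgs_of_keys s.
Proof.
case=> f f_inj ->; rewrite /rgs_of_keys -map_comp; apply/eq_in_map => k ks /=.
rewrite index_map_in // -map_take size_undup_map_in //.
by apply: sub_in2 f_inj; apply: mem_take.
Qed.

Lemma relabeling_rgs_of_keys s : relabeling s (rgs_of_keys s).
Proof.
exists (fun k => ndistinct s (index k s).+1) => // a b a_s b_s.
have lt_nd c d : d \in s -> index c s < index d s ->
    ndistinct s (index c s).+1 < ndistinct s (index d s).+1.
  by move=> d_s lt_cd; rewrite (ndistinct_index d_s) ltnS; apply: ndistinct_mono.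
move=> e; apply/eqP; rewrite -(inj_in_eq (@index_inj _ 0 s) a_s b_s).
by case: ltngtP => // [/(lt_nd _ _ b_s) | /(lt_nd _ _ a_s)]; rewrite e ltnn.
Qed.

Lemma max_rgs_of_keys s i : i <= size s ->
  \max_(j < i) nth 0 (rgs_of_keys s) j = ndistinct s i.
Proof.
elim: i => [|i IH] lt_is; first by rewrite big_ord0 /ndistinct take0.
rewrite big_ord_recr /= (IH (ltnW lt_is)) nth_rgs_of_keys //.
case: (boolP (nth 0 s i \in take i s)) => [in_tk | not_tk].
  rewrite (ndistinctS lt_is) in_tk addn0; apply/maxn_idPl.
  by apply: ndistinct_mono; apply: index_ltn.
have -> : index (nth 0 s i) s = i.
  by apply/eqP; rewrite eqn_leq index_nth // leqNgt -in_take ?mem_nth.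
by apply/maxn_idPr; apply: ndistinct_mono.
Qed.

Lemma rgs_of_keys_is_rgs s : is_rgs (size s) (rgs_of_keys s).
Proof.
split=> [|i lt_is]; first by rewrite size_map.
rewrite (max_rgs_of_keys (ltnW lt_is)) nth_rgs_of_keys // ndistinct_index ?mem_nth //.
by rewrite ltnS; apply: ndistinct_mono; apply: index_nth.
Qed.

Lemma subseq_contains_1212 y a b :
  a < b -> subseq [:: a; b; a; b] y -> contains y [:: 1; 2; 1; 2].
Proof.
move=> lt_ab sub; exists [:: a; b; a; b]; split=> //; split=> //.
by case=> [|[|[|[|?]]]] [|[|[|[|?]]]] //= _ _; rewrite ?ltnn ?eqxx; split; lia.
Qed.

Lemma contains_1212_crossing x : contains x [:: 1; 2; 1; 2] -> ~ noncrossing x.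
Proof.
case=> y [+ [+ pat]] nc; case: y pat => [|a [|b [|a' [|b' [|]]]]] // pat sub _.
move: (pat 0 2 isT isT).2 (pat 1 3 isT isT).2 (pat 0 1 isT isT).2 => /= /eqP ea /eqP eb.
by rewrite -ea -eb in sub; rewrite (nc a b sub) eqxx.
Qed.

Section RestrictedGrowth.
Variables (n : nat) (x : seq nat).
Hypothesis x_rgs : is_rgs n x.
Let M i := \max_(j < i) nth 0 x j.

Lemma mem_take_rgs i (w : nat) : i <= n -> (w \in take i x) = (0 < w <= M i).
Proof.
case: x_rgs => size_x x_grows; elim: i => [|i IH] le_in.
  by rewrite take0 /M big_ord0 in_nil; lia.
rewrite (take_nth 0) ?size_x // mem_rcons inE (IH (ltnW le_in)) /M big_ord_recr /=.
by move: (\max_(j < i) _) (nth 0 x i) (x_grows i le_in) => m a; lia.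
Qed.

Lemma ndistinct_rgs i : i <= n -> ndistinct x i = M i.
Proof.
move=> le_in; rewrite /ndistinct -(size_iota 1 (M i)).
apply/perm_size/uniq_perm; rewrite ?undup_uniq ?iota_uniq // => w.
by rewrite mem_undup mem_take_rgs // mem_iota add1n ltnS.
Qed.

Lemma rgs_of_keys_rgs : rgs_of_keys x = x.
Proof.
case: (x_rgs) => size_x x_grows; apply: (@eq_from_nth _ 0); first by rewrite size_map.
move=> i; rewrite size_map => lt_ix; rewrite nth_rgs_of_keys //; set j := index (nth 0 x i) x.
have xi_x : nth 0 x i \in x := mem_nth 0 lt_ix.
have lt_jn : j < n by rewrite -size_x index_mem.
have xj : nth 0 x j = nth 0 x i by rewrite /j nth_index.
have : nth 0 x i \notin take j x by rewrite in_take // ltnn.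
rewrite (mem_take_rgs _ (ltnW lt_jn)) (ndistinct_rgs lt_jn) /M big_ord_recr /= xj.
by move: (\max_(k < j) _) (x_grows j lt_jn); rewrite xj => m; lia.
Qed.

Lemma rgs_contains_1212 a b :
  subseq [:: a; b; a; b] x -> a != b -> contains x [:: 1; 2; 1; 2].
Proof.
case: (x_rgs) => size_x x_grows sub; case: ltngtP => // [lt_ab | lt_ba] _.
  exact: subseq_contains_1212 sub.
have mem_x k : k \in [:: a; b; a; b] -> k \in x by apply: mem_subseq.
have a_x : a \in x by rewrite mem_x ?mem_head.
have ex : x = take (index a x) x ++ a :: drop (index a x).+1 x.
  by rewrite -{2}(nth_index 0 a_x) -drop_nth ?cat_take_drop ?index_mem.
move: (index_mem a x); rewrite a_x size_x; set j := index a x => lt_jn.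
have b_take : b \in take j x.
  have b_x : b \in x by rewrite mem_x // !inE eqxx orbT.
  have b_pos : 0 < b.
    move: (x_grows (index b x)); rewrite -size_x index_mem b_x (nth_index 0 b_x).
    by case/(_ isT)/andP.
  have : a \notin take j x by rewrite in_take // ltnn.
  have := x_grows j lt_jn; rewrite /j (nth_index 0 a_x) -/j.
  rewrite !(mem_take_rgs _ (ltnW lt_jn)) /M.
  by move: (\max_(k < j) _) => m; lia.
apply: (subseq_contains_1212 lt_ba); rewrite ex -cat1s; apply: cat_subseq; first by rewrite sub1seq.
rewrite /= eqxx; apply: subseq_trans (prefix_subseq _ [:: b]) _.
by apply: (@subseq_cons_notin _ a _ (take j x)); rewrite ?in_take ?ltnn // -ex.
Qed.
End RestrictedGrowth.

Lemma rgs1212_noncrossing n x : rgs1212 n x <-> is_rgs n x /\ noncrossing x.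
Proof.
split=> [[x_rgs no_pat] | [x_rgs nc]]; split=> //; last by move=> /contains_1212_crossing; apply.
move=> a b sub; apply/eqP; apply: contraT => ab.
by case: no_pat; exact: (rgs_contains_1212 x_rgs sub ab).
Qed.

Lemma bij_between_rgs_of_keys n (K : btree -> seq nat) :
  (forall t, size (K t) = bsize t) ->
  (forall t, noncrossing (K t)) ->
  (forall t1 t2 x, relabeling (K t1) x -> relabeling (K t2) x -> t1 = t2) ->
  (forall x, noncrossing x -> exists t, relabeling (K t) x) ->
  bij_between (trees n) (rgs1212 n) (fun t => rgs_of_keys (K t)).
Proof.
move=> size_K nc_K inj_K surj_K; split; [|split].
- move=> t <-; apply/rgs1212_noncrossing; rewrite -size_K; split.
    exact: rgs_of_keys_is_rgs.
  exact: noncrossing_relabeling (relabeling_rgs_of_keys _) (nc_K t).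
- move=> t1 t2 _ _ e; apply: (inj_K _ _ (rgs_of_keys (K t2))).
    by rewrite -e; apply: relabeling_rgs_of_keys.
  exact: relabeling_rgs_of_keys.
- move=> x /rgs1212_noncrossing [x_rgs /surj_K [t rt]]; exists t; split.
    by rewrite /trees -size_K -(size_relabeling rt); case: x_rgs.
  by rewrite -(rgs_of_keys_relabeling rt) (rgs_of_keys_rgs x_rgs).
Qed.

Theorem lemma14 (n : nat) :
  bij_between (trees n) (rgs1212 n) phiL /\
  bij_between (trees n) (rgs1212 n) phiR.
Proof.
split.
  apply: (@bij_between_rgs_of_keys n (fun t => lkeys t 0 None)).
  - by move=> t; rewrite size_lkeys.
  - by move=> t; apply: noncrossing_lkeys.
  - by move=> t1 t2 x; apply: lkeys_relabeling_inj.
  - by move=> x; apply: lkeys_relabeling_surj.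
apply: (@bij_between_rgs_of_keys n (fun t => rkeys t 0 None)).
- by move=> t; rewrite size_rkeys.
- exact: noncrossing_rkeys.
- exact: rkeys_relabeling_inj.
- exact: rkeys_relabeling_surj.
Qed.
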